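(* Let $(A,\cdot)$ and $(B,\circ)$ be nearly associative algebras over a field $\mathbb{K}$ of characteristic $0$. Suppose $(l_A,r_A,B)$ is a bimodule of $(A,\cdot)$ and $(l_B,r_B,A)$ is a bimodule of $(B,\circ)$, where $l_A,r_A:A\to\mathrm{End}(B)$ and $l_B,r_B:B\to\mathrm{End}(A)$ are linear maps satisfying, for all $x,y\in A$ and $a,b\in B$: \begin{align*} &r_B(l_A(x)a)y+y\cdot(r_B(a)x)-(l_B(a)y)\cdot x-l_B(r_A(y)a)x=0,\\ &r_B(a)(x\cdot y)-y\cdot(l_B(a)x)-r_B(r_A(x)a)y=0,\\ &l_B(a)(x\cdot y)-(r_B(a)y)\cdot x-l_B(l_A(y)a)x=0,\\ &r_A(l_B(a)x)b+b\circ(r_A(x)a)-(l_A(x)b)\circ a-l_A(r_B(b)x)a=0,\\ &r_A(x)(a\circ b)-b\circ(l_A(x)a)-r_A(r_B(a)x)b=0,\\ &l_A(x)(a\circ b)-(r_A(x)b)\circ a-l_A(l_B(b)x)a=0. \end{align*} Then $(A\oplus B,\ast)$ is a nearly associative algebra, where $(x+a)\ast(y+b)=(x\cdot y+l_B(a)y+r_B(b)x)+(a\circ b+l_A(x)b+r_A(y)a)$ for all $x,y\in A$, $a,b\in B$.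
   Context: An algebra $(A,\cdot)$ is nearly associative if $x\cdot(y\cdot z)=(z\cdot x)\cdot y$ for all $x,y,z\in A$. A triple $(l,r,V)$, with $V$ a linear space and $l,r:A\to\mathrm{End}(V)$ linear, is a bimodule of $(A,\cdot)$ if for all $x,y\in A$: $l(x)l(y)=r(y)r(x)$, $l(x)r(y)=l(y\cdot x)$, and $r(x)l(y)=r(x\cdot y)$. *)

From HB Require Import structures.
From mathcomp Require Import all_boot all_algebra.
Set Implicit Arguments. Unset Strict Implicit. Unset Printing Implicit Defensive.
Import GRing.Theory.
Local Open Scope ring_scope.

Definition bilinear_map (K : fieldType) (U V W : lmodType K) (f : U -> V -> W) :=
  (forall v, linear (fun u => f u v)) /\ (forall u, linear (f u)).

Definition nearly_associative (T : Type) (mul : T -> T -> T) :=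
  forall x y z, mul x (mul y z) = mul (mul z x) y.

Definition bimodule (K : fieldType) (A V : lmodType K)
  (mul : A -> A -> A) (l r : A -> V -> V) :=
  bilinear_map l /\ bilinear_map r /\
  (forall x y v, l x (l y v) = r y (r x v)) /\
  (forall x y v, l x (r y v) = l (mul y x) v) /\
  (forall x y v, r x (l y v) = r (mul x y) v).

Definition sum_prod (K : fieldType) (A B : lmodType K)
  (mulA : A -> A -> A) (mulB : B -> B -> B)
  (lA rA : A -> B -> B) (lB rB : B -> A -> A) (u v : A * B) : A * B :=
  (mulA u.1 v.1 + lB u.2 v.1 + rB v.2 u.1,
   mulB u.2 v.2 + lA u.1 v.2 + rA v.1 u.2).

From HB Require Import structures.
From mathcomp Require Import all_boot all_algebra.
Import GRing.Theory.
Local Open Scope ring_scope.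
Set Implicit Arguments. Unset Strict Implicit.

(* By bilinearity, the A-component of (x + a) * ((y + b) * (z + c)) and of
   ((z + c) * (x + a)) * (y + b) are sums of nine terms each.  Four pairs of
   them agree by near associativity of A and by the three bimodule axioms of
   (l_B, r_B, A); the five remaining terms on each side are matched by the
   three compatibility conditions involving l_B and r_B.  The B-component is
   the A-component of the same construction with the roles of A and B
   exchanged, and is handled by the other three conditions. *)

Lemma linear_morphD (K : fieldType) (U V : lmodType K) (f : U -> V) :
  linear f -> {morph f : u v / u + v}.
Proof. by move=> f_lin u v; rewrite -[u in LHS]scale1r f_lin scale1r. Qed.

Lemma bilinear_mapDl (K : fieldType) (U V W : lmodType K) (f : U -> V -> W) :
  bilinear_map f -> forall v, {morph f^~ v : u u' / u + u'}.
Proof. by case=> f_linl _ v; exact: linear_morphD (f_linl v). Qed.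

Lemma bilinear_mapDr (K : fieldType) (U V W : lmodType K) (f : U -> V -> W) :
  bilinear_map f -> forall u, {morph f u : v v' / v + v'}.
Proof. by case=> _ f_linr u; exact: linear_morphD (f_linr u). Qed.

Lemma linear_add (K : fieldType) (U V : lmodType K) (f g : U -> V) :
  linear f -> linear g -> linear (fun u => f u + g u).
Proof. by move=> f_lin g_lin a u v; rewrite f_lin g_lin scalerDr addrACA. Qed.

Lemma linear_pair (K : fieldType) (U V W : lmodType K) (f : U -> V) (g : U -> W) :
  linear f -> linear g -> linear (fun u => (f u, g u)).
Proof. by move=> f_lin g_lin a u v; rewrite f_lin g_lin. Qed.

Section SumProduct.
Variables (K : fieldType) (A B : lmodType K).
Variables (mulA : A -> A -> A) (mulB : B -> B -> B).
Variables (lA rA : A -> B -> B) (lB rB : B -> A -> A).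

Local Notation mul := (sum_prod mulA mulB lA rA lB rB).

Lemma sum_prod_bilinear :
  bilinear_map mulA -> bilinear_map mulB -> bilinear_map lA ->
  bilinear_map rA -> bilinear_map lB -> bilinear_map rB -> bilinear_map mul.
Proof.
move=> [mulAl mulAr] [mulBl mulBr] [lAl lAr] [rAl rAr] [lBl lBr] [rBl rBr].
rewrite /sum_prod; split=> v; apply: linear_pair;
  (apply: linear_add; first apply: linear_add); move=> k p q /=;
  by rewrite ?(mulAl _, mulAr _, mulBl _, mulBr _, lAl _, lAr _, rAl _, rAr _,
               lBl _, lBr _, rBl _, rBr _).
Qed.

Lemma sum_prod_assoc_fst :
  bilinear_map mulA -> nearly_associative mulA -> bimodule mulB lB rB ->
  (forall x y a, rB (lA x a) y + mulA y (rB a x) - mulA (lB a y) x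
                 - lB (rA y a) x = 0) ->
  (forall x y a, rB a (mulA x y) - mulA y (lB a x) - rB (rA x a) y = 0) ->
  (forall x y a, lB a (mulA x y) - mulA (rB a y) x - lB (lA y a) x = 0) ->
  forall u v w, (mul u (mul v w)).1 = (mul (mul w u) v).1.
Proof.
move=> mulA_bil mulA_assoc [lB_bil [rB_bil [lBlB [lBrB rBlB]]]].
move=> rB_lA_compat rB_mulA_compat lB_mulA_compat [x a] [y b] [z c] /=.
rewrite !(bilinear_mapDl mulA_bil, bilinear_mapDr mulA_bil, bilinear_mapDl lB_bil,
          bilinear_mapDr lB_bil, bilinear_mapDl rB_bil, bilinear_mapDr rB_bil).
have /eqP := rB_lA_compat y x c; rewrite !subr_eq !add0r => /eqP rB_lA.
have /eqP := rB_mulA_compat z x b; rewrite !subr_eq !add0r => /eqP rB_mulA.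
have /eqP := lB_mulA_compat y z a; rewrite !subr_eq !add0r => /eqP lB_mulA.
have {}rB_lA :
    mulA x (rB c y) = lB (rA x c) y + mulA (lB c x) y - rB (lA y c) x.
  by rewrite -rB_lA [RHS]addrC addKr.
rewrite mulA_assoc lBlB lBrB -rBlB rB_mulA lB_mulA rB_lA !addrA.
(* The RHS terms in order, followed by [- rB (lA y c) x] and [rB (lA y c) x]. *)
by rewrite [LHS](@GRing.add A).[ACl (1*4*7*9*6*3*12*2*10*8*5*11)] addrNK.
Qed.

End SumProduct.

Theorem mainTheorem7 (K : fieldType) (charK0 : [pchar K] =i pred0)
  (A B : lmodType K) (mulA : A -> A -> A) (mulB : B -> B -> B)
  (lA rA : A -> B -> B) (lB rB : B -> A -> A) :
  bilinear_map mulA -> nearly_associative mulA ->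
  bilinear_map mulB -> nearly_associative mulB ->
  bimodule mulA lA rA -> bimodule mulB lB rB ->
  (forall x y a, rB (lA x a) y + mulA y (rB a x) - mulA (lB a y) x
                 - lB (rA y a) x = 0) ->
  (forall x y a, rB a (mulA x y) - mulA y (lB a x) - rB (rA x a) y = 0) ->
  (forall x y a, lB a (mulA x y) - mulA (rB a y) x - lB (lA y a) x = 0) ->
  (forall x a b, rA (lB a x) b + mulB b (rA x a) - mulB (lA x b) a
                 - lA (rB b x) a = 0) ->
  (forall x a b, rA x (mulB a b) - mulB b (lA x a) - rA (rB a x) b = 0) ->
  (forall x a b, lA x (mulB a b) - mulB (rA x b) a - lA (lB b x) a = 0) ->
  bilinear_map (sum_prod mulA mulB lA rA lB rB) /\
  nearly_associative (sum_prod mulA mulB lA rA lB rB).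
Proof.
move=> mulA_bil mulA_assoc mulB_bil mulB_assoc A_bimod B_bimod e1 e2 e3 e4 e5 e6.
have [[lA_bil [rA_bil _]] [lB_bil [rB_bil _]]] := (A_bimod, B_bimod).
split; first exact: sum_prod_bilinear.
move=> [x a] [y b] [z c]; apply: injective_projections.
  exact: sum_prod_assoc_fst.
(* Definitionally, the second component is the first one for the product on
   B * A with the roles of A and B exchanged. *)
exact: (sum_prod_assoc_fst mulB_bil mulB_assoc A_bimod (fun a b x => e4 x a b)
  (fun a b x => e5 x a b) (fun a b x => e6 x a b) (a, x) (b, y) (c, z)).
Qed.
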